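(* Let $k$ be any field and let $m,n\ge 1$. There exists a straight line program $\Gamma^{tR}$ of length $O(mn^2+n^3)$ which, on input the entries of an $m\times n$ matrix $A=(a_{ij})$ over $k$, has as its order-$n^2$ output the $n^2$ entries of the triangular reduced row echelon form of $A$. In particular, each entry of the triangular reduced row echelon form of $A$ is a constructible function of the $a_{ij}$ (an element of the ring generated from $k[a_{ij}]$ by ring operations and the quasi-inverse).
   Context: The quasi-inverse of a function $f$ is $\{f\}(p)=1/f(p)$ if $f(p)\neq0$ and $0$ otherwise. A straight line program on inputs $a_{-m'},\dots,a_{-1}$ (in tape cells $-m',\dots,-1$) is a finite list of instructions $\Gamma_0,\dots,\Gamma_{L-1}$; instruction $\Gamma_i$ writes into cell $i$ one of: $a_{i-j}+a_{i-k}$, $a_{i-j}-a_{i-k}$, $a_{i-j}\cdot a_{i-k}$, $\{a_{i-j}\}$, a constant $c\in k$, or a copy (''recall'') of $a_{i-j}$, with $j,k$ positive integers. Its length is $L$, and its order-$d$ output is $(a_{L-d},\dots,a_{L-1})$. The triangular reduced row echelon form (tRREF) of an $m\times n$ matrix $A$ is the $n\times n$ matrix $R_A$ whose $j$-th row is nonzero if and only if the (usual) reduced row echelon form of $A$ has a pivot in column $j$, in which case the $j$-th row of $R_A$ is the row of the RREF of $A$ containing that pivot. Thus the RREF of $A$ has a pivot in column $j$ iff the $(j,j)$ entry of $R_A$ equals $1$ (and otherwise it is $0$). *)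

From HB Require Import structures.
From mathcomp Require Import all_boot all_order all_algebra.
Set Implicit Arguments. Unset Strict Implicit. Unset Printing Implicit Defensive.
Import Order.TTheory GRing.Theory Num.Theory.
Local Open Scope ring_scope.

Definition qinv (k : fieldType) (x : k) : k := if x == 0 then 0 else x^-1.

(* Straight line program instructions.  Offsets j, l are meant to be
   positive integers; instruction i reads cells i-j, i-l. *)
Inductive instr (k : fieldType) : Type :=
  | IAdd of nat & nat
  | ISub of nat & nat
  | IMul of nat & nat
  | IQinv of nat
  | IConst of k
  | IRecall of nat.

Definition slp (k : fieldType) := seq (instr k).

Definition instr_offsets (k : fieldType) (g : instr k) : seq nat :=
  match g with
  | IAdd j l | ISub j l | IMul j l => [:: j; l]
  | IQinv j | IRecall j => [:: j]
  | IConst _ => [::]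
  end.

(* Well-formedness on m' inputs: instruction Gamma_i only uses offsets j with
   1 <= j and i - j >= -m', i.e. j <= m' + i. *)
Definition slp_wf (k : fieldType) (m' : nat) (p : slp k) : Prop :=
  forall i, (i < size p)%N ->
    all (fun j => (0 < j <= m' + i)%N) (instr_offsets (nth (IConst 0) p i)).

(* The tape is the list a_{-m'}, ..., a_{-1}, a_0, ..., a_{i-1};
   a_{i-j} is the entry at position size - j. *)
Definition tape_get (k : fieldType) (t : seq k) (j : nat) : k :=
  nth 0 t (size t - j).

Definition exec_instr (k : fieldType) (t : seq k) (g : instr k) : k :=
  match g with
  | IAdd j l => tape_get t j + tape_get t l
  | ISub j l => tape_get t j - tape_get t l
  | IMul j l => tape_get t j * tape_get t l
  | IQinv j => qinv (tape_get t j)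
  | IConst c => c
  | IRecall j => tape_get t j
  end.

Definition run_slp (k : fieldType) (p : slp k) (inputs : seq k) : seq k :=
  foldl (fun t g => rcons t (exec_instr t g)) inputs p.

Definition slp_output (k : fieldType) (d : nat) (p : slp k) (inputs : seq k)
  : seq k :=
  let t := run_slp p inputs in drop (size t - d) t.

Definition mx_entries (k : fieldType) (m n : nat) (A : 'M[k]_(m, n)) : seq k :=
  [seq A i j | i <- enum 'I_m, j <- enum 'I_n].

Definition is_pivot (k : fieldType) (m n : nat) (R : 'M[k]_(m, n))
  (i : 'I_m) (j : 'I_n) : bool :=
  (R i j != 0) && [forall j' : 'I_n, (j' < j)%N ==> (R i j' == 0)].

Definition is_rref (k : fieldType) (m n : nat) (R : 'M[k]_(m, n)) : Prop :=
  (forall (i1 i2 : 'I_m) (j2 : 'I_n), (i1 < i2)%N -> is_pivot R i2 j2 ->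
      exists2 j1 : 'I_n, (j1 < j2)%N & is_pivot R i1 j1) /\
  (forall (i : 'I_m) (j : 'I_n), is_pivot R i j ->
      R i j = 1 /\ forall i' : 'I_m, i' != i -> R i' j = 0).

Definition rref_of (k : fieldType) (m n : nat) (A R : 'M[k]_(m, n)) : Prop :=
  is_rref R /\ exists2 P : 'M[k]_m, P \in unitmx & R = P *m A.

Definition tRREF (k : fieldType) (m n : nat) (R : 'M[k]_(m, n)) : 'M[k]_n :=
  \matrix_(j, l) match [pick i | is_pivot R i j] with
                 | Some i => R i l
                 | None => 0
                 end.

Inductive constructible (k : fieldType) (m n : nat) : ('M[k]_(m, n) -> k) -> Prop :=
  | cons_const (c : k) : constructible (fun _ => c)
  | cons_coord (i : 'I_m) (j : 'I_n) : constructible (fun A => A i j)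
  | cons_add f g : constructible f -> constructible g ->
      constructible (fun A => f A + g A)
  | cons_opp f : constructible f -> constructible (fun A => - f A)
  | cons_mul f g : constructible f -> constructible g ->
      constructible (fun A => f A * g A)
  | cons_qinv f : constructible f -> constructible (fun A => qinv (f A)).

From HB Require Import structures.
From mathcomp Require Import all_boot all_order all_algebra zify.
From Stdlib Require Import Lia FunctionalExtensionality.
Set Implicit Arguments. Unset Strict Implicit. Unset Printing Implicit Defensive.
Import Order.TTheory GRing.Theory Num.Theory.
Local Open Scope ring_scope.

(* The tRREF of A is the unique matrix of the shape [is_trref] with the row
   space of A: such matrices are upper triangular and idempotent, and if S, T
   are two of them with the same row space then S = S T and T = T S, which
   forces equal diagonals and then S = T.  It is computed one row v of A at a
   time.  With T the tRREF of the rows already seen, the residual v - v T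
   vanishes on the pivot columns of T; the indicators x {x} and 1 - x {x} of
   x <> 0 and x = 0 locate its first nonzero entry without branching, and a
   rank-one update T + u w normalises it into a new pivot row w and clears the
   column of that pivot.  Each insertion costs O(n^2) operations, which gives
   a straight line program of length O(m n^2 + n^2), and every cell computed
   by a straight line program is constructible. *)

Lemma size_index_enum (T : finType) : size (index_enum T) = #|T|.
Proof. by rewrite cardT enumT /index_enum; unlock. Qed.

Lemma foldl_bigop (R : Type) (idx : R) (op : Monoid.law idx) I (F : I -> R) x s :
  foldl (fun y i => op y (F i)) x s = op x (\big[op/idx]_(i <- s) F i).
Proof.
by elim: s x => [|i s IHs] x /=; rewrite ?big_nil ?Monoid.mulm1 // IHs big_cons Monoid.mulmA.
Qed.

Lemma nth_flatten_map I T (x0 : T) (f : I -> seq T) (s : seq I) y0 n i j :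
  (forall x, size (f x) = n) -> (i < size s)%N -> (j < n)%N ->
  nth x0 (flatten (map f s)) (i * n + j) = nth x0 (f (nth y0 s i)) j.
Proof.
move=> size_f; elim: s i => [|x s IHs] [|i] //= i_lt j_lt; rewrite nth_cat size_f.
  by rewrite mul0n add0n j_lt.
by rewrite mulSn -addnA ltnNge leq_addr /= addKn IHs.
Qed.

(** * Triangular reduced row echelon forms *)

Lemma qinvE (k : fieldType) (x : k) : qinv x = x^-1.
Proof. by rewrite /qinv; case: eqP => // ->; rewrite invr0. Qed.

Lemma mulr_qinv (k : fieldType) (x : k) : x * qinv x = (x != 0)%:R.
Proof. by rewrite qinvE; case: eqP => [->|/eqP x0]; rewrite ?mul0r ?divff. Qed.

Lemma row_pivot_or_zero (k : fieldType) m n (R : 'M[k]_(m, n)) i :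
  row i R = 0 \/ exists p, is_pivot R i p.
Proof.
case: (pickP (fun l => R i l != 0)) => [l0 Ril0 | R0]; last first.
  by left; apply/rowP=> l; rewrite !mxE; apply/eqP/negbFE/R0.
right; have [p Rip p_min] := @arg_minnP _ l0 (fun l => R i l != 0) val Ril0.
exists p; apply/andP; split=> //; apply/forallP=> l; apply/implyP=> lp.
by apply: contraTT lp => Ril; rewrite -leqNgt p_min.
Qed.

Lemma is_pivot_inj (k : fieldType) m n (R : 'M[k]_(m, n)) i p q :
  is_pivot R i p -> is_pivot R i q -> p = q.
Proof.
move=> /andP[Rip /forallP p_min] /andP[Riq /forallP q_min].
case: (ltngtP p q) => [pq|qp|/val_inj //].
  by move: (q_min p); rewrite pq => /eqP Rip0; rewrite Rip0 eqxx in Rip.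
by move: (p_min q); rewrite qp => /eqP Riq0; rewrite Riq0 eqxx in Riq.
Qed.

Section TriangularRREF.
Variables (k : fieldType) (n : nat).
Implicit Types (S T : 'M[k]_n).

(* The shape of every [tRREF R], stated without reference to R. *)
Definition is_trref T : Prop :=
  [/\ forall j l : 'I_n, (l < j)%N -> T j l = 0,
      forall j, T j j = 0 \/ T j j = 1,
      forall j l, T j j = 0 -> T j l = 0
    & forall j i, T j j = 1 -> i != j -> T i j = 0].

Lemma trref0 : is_trref 0.
Proof. by split=> [j l _|j|j l _|j i]; rewrite ?mxE //; left. Qed.

Lemma trref_idem T : is_trref T -> T *m T = T.
Proof.
case=> _ T01 T_zero T_piv; apply/matrixP=> j l; rewrite mxE.
case: (T01 j) => Tjj.
  by rewrite (T_zero j l Tjj) big1 // => i _; rewrite (T_zero j i Tjj) mul0r.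
rewrite (bigD1 j) //= Tjj mul1r big1 ?addr0 // => i /negbTE ij.
case: (T01 i) => Tii; first by rewrite (T_zero i l Tii) mulr0.
by rewrite T_piv ?mul0r // eq_sym ij.
Qed.

Lemma trref_mulmx_id m (S : 'M[k]_(m, n)) T : is_trref T -> (S <= T)%MS -> S *m T = S.
Proof. by move=> trT /submxP[D ->]; rewrite -mulmxA trref_idem. Qed.

Lemma trref_mul_diag S T j : is_trref S -> is_trref T -> (S *m T) j j = S j j * T j j.
Proof.
case=> S_up _ _ _ [T_up _ _ _]; rewrite mxE (bigD1 j) //= big1 ?addr0 // => i ij.
case: (ltngtP i j) => [ij'|ji|/val_inj eq_ij]; last by rewrite eq_ij eqxx in ij.
  by rewrite S_up ?mul0r.
by rewrite T_up ?mulr0.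
Qed.

Lemma trref_eqmx_eq S T : is_trref S -> is_trref T -> (S :=: T)%MS -> S = T.
Proof.
move=> trS trT /eqmxP/andP[sST sTS].
have ST := trref_mulmx_id trT sST; have TS := trref_mulmx_id trS sTS.
have diagST j : S j j = T j j.
  have := trref_mul_diag j trS trT; have := trref_mul_diag j trT trS.
  rewrite ST TS; case: trS => _ S01 _ _; case: trT => _ T01 _ _.
  by case: (S01 j) => ->; case: (T01 j) => ->; rewrite ?mulr0 ?mulr1.
case: (trS) => _ S01 S_zero S_piv; case: (trT) => _ T01 T_zero _.
apply/matrixP=> j l; case: (S01 j) => Sjj.
  by rewrite (S_zero j l Sjj) (T_zero j l) // -diagST.
rewrite -ST mxE (bigD1 j) //= Sjj mul1r big1 ?addr0 // => i ij.
case: (T01 i) => Tii; first by rewrite (T_zero i l Tii) mulr0.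
by rewrite S_piv ?mul0r ?diagST // eq_sym.
Qed.

End TriangularRREF.

Section Insertion.
Variables (k : fieldType) (n : nat).
Implicit Types (T : 'M[k]_n) (v : 'rV[k]_n) (j l : 'I_n).

Definition nzind (x : k) : k := x * qinv x.

Definition residual T v : 'rV[k]_n := v - v *m T.

(* Indicator of the first nonzero column of the residual, computed without branching. *)
Definition pivot_sel T v (l : 'I_n) : k :=
  (\prod_(i < n | (i < l)%N) (1 - nzind (residual T v 0 i))) * nzind (residual T v 0 l).

Definition pivot_row T v : 'rV[k]_n :=
  (\sum_l pivot_sel T v l * qinv (residual T v 0 l)) *: residual T v.

Definition elim_col T v : 'cV[k]_n :=
  \col_j (pivot_sel T v j - \sum_l T j l * pivot_sel T v l).

Definition trref_insert T v : 'M[k]_n := T + elim_col T v *m pivot_row T v.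

Lemma trref_insertE T v j l :
  trref_insert T v j l = T j l + elim_col T v j 0 * pivot_row T v 0 l.
Proof. by rewrite /trref_insert [LHS]mxE [(_ *m _) _ _]mxE big_ord1. Qed.

Lemma trref_insert_residual0 T v : residual T v = 0 -> trref_insert T v = T.
Proof.
move=> r0; have sel0 l : pivot_sel T v l = 0 by rewrite /pivot_sel /nzind r0 mxE mul0r mulr0.
rewrite /trref_insert; suff -> : elim_col T v = 0 by rewrite mul0mx addr0.
by apply/colP=> j; rewrite !mxE sel0 big1 ?subr0 // => l _; rewrite sel0 mulr0.
Qed.

Variables (T : 'M[k]_n) (v : 'rV[k]_n).
Hypothesis trT : is_trref T.

Lemma residual_pivot_col j : T j j = 1 -> residual T v 0 j = 0.
Proof.
case: trT => _ _ _ T_piv Tjj; rewrite !mxE (bigD1 j) //= Tjj mulr1 big1 ?addr0 ?subrr //.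
by move=> i ij; rewrite T_piv ?mulr0.
Qed.

Section Pivot.
Variable p : 'I_n.
Hypothesis pivot_p : is_pivot (residual T v) 0 p.

Let res_p : residual T v 0 p != 0.
Proof. by case/andP: pivot_p. Qed.

Let res_lt l : (l < p)%N -> residual T v 0 l = 0.
Proof. by case/andP: pivot_p => _ /forallP/(_ l)/implyP lp /lp/eqP. Qed.

Lemma pivot_selE l : pivot_sel T v l = (l == p)%:R.
Proof.
have nzE i : nzind (residual T v 0 i) = (residual T v 0 i != 0)%:R by apply: mulr_qinv.
rewrite /pivot_sel; case: (ltngtP l p) => [lp|pl|/val_inj ->].
- by rewrite nzE res_lt // eqxx mulr0 (introF eqP) // => eq_lp; rewrite eq_lp ltnn in lp.
- rewrite (bigD1 p) //= nzE res_p subrr !mul0r (introF eqP) // => eq_lp.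
  by rewrite eq_lp ltnn in pl.
- by rewrite big1 ?mul1r ?nzE ?res_p ?eqxx // => i ip; rewrite nzE res_lt ?eqxx ?subr0.
Qed.

Lemma pivot_rowE : pivot_row T v = (residual T v 0 p)^-1 *: residual T v.
Proof.
rewrite /pivot_row (bigD1 p) //= pivot_selE eqxx mul1r big1 ?addr0 ?qinvE //.
by move=> i /negbTE ip; rewrite pivot_selE ip mul0r.
Qed.

Lemma pivot_row_p : pivot_row T v 0 p = 1.
Proof. by rewrite pivot_rowE mxE mulVf. Qed.

Lemma pivot_row_lt l : (l < p)%N -> pivot_row T v 0 l = 0.
Proof. by move=> lp; rewrite pivot_rowE mxE (res_lt lp) mulr0. Qed.

Lemma pivot_row_pivot_col l : T l l = 1 -> pivot_row T v 0 l = 0.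
Proof. by move=> Tll; rewrite pivot_rowE mxE (residual_pivot_col Tll) mulr0. Qed.

Lemma trref_diag_pivot : T p p = 0.
Proof.
case: trT => _ T01 _ _; case: (T01 p) => // /residual_pivot_col res0.
by have := res_p; rewrite res0 eqxx.
Qed.

Lemma trref_insert_pivotE j l :
  trref_insert T v j l = T j l + ((j == p)%:R - T j p) * pivot_row T v 0 l.
Proof.
rewrite trref_insertE !mxE (bigD1 p) //= !pivot_selE eqxx mulr1.
by rewrite big1 ?addr0 // => i /negbTE ip; rewrite pivot_selE ip mulr0.
Qed.

Lemma trref_insert_diag j : trref_insert T v j j = if j == p then 1 else T j j.
Proof.
case: trT => T_up _ _ _; rewrite trref_insert_pivotE; case: eqP => [->|/eqP jp].
  by rewrite trref_diag_pivot pivot_row_p subr0 mulr1 add0r.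
rewrite sub0r; case: (ltngtP j p) => [jp'|pj|/val_inj eq_jp]; last by rewrite eq_jp eqxx in jp.
  by rewrite pivot_row_lt // mulr0 addr0.
by rewrite (T_up j p) // oppr0 mul0r addr0.
Qed.

Lemma row_trref_insert_pivot : row p (trref_insert T v) = pivot_row T v.
Proof.
case: trT => _ _ T_zero _; apply/rowP=> l; rewrite mxE trref_insert_pivotE eqxx.
by rewrite trref_diag_pivot subr0 mul1r (T_zero p l trref_diag_pivot) add0r.
Qed.

Lemma residual_pivot_rowE : residual T v = residual T v 0 p *: pivot_row T v.
Proof. by rewrite pivot_rowE scalerA mulfV ?scale1r. Qed.

End Pivot.

Lemma trref_insert_trref : is_trref (trref_insert T v).
Proof.
have [|[p pivot_p]] := row_pivot_or_zero (residual T v) 0.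
  by rewrite row_id => /trref_insert_residual0 ->.
have E := trref_insert_pivotE pivot_p; have diag := trref_insert_diag pivot_p.
case: (trT) => T_up T01 T_zero T_piv; split.
- move=> j l lj; rewrite E T_up // add0r.
  case: eqP => [eq_jp|/eqP jp]; first by rewrite (pivot_row_lt pivot_p) ?mulr0 // -eq_jp.
  rewrite sub0r; case: (ltngtP j p) => [jp'|pj|/val_inj eq_jp]; last by rewrite eq_jp eqxx in jp.
    by rewrite (pivot_row_lt pivot_p) ?mulr0 // (ltn_trans lj jp').
  by rewrite T_up // oppr0 mul0r.
- by move=> j; rewrite diag; case: eqP => _; [right | exact: T01].
- move=> j l; rewrite diag; case: eqP => [_ /eqP|/eqP jp Tjj]; first by rewrite oner_eq0.
  by rewrite E (negbTE jp) (T_zero j l Tjj) (T_zero j p Tjj) subrr mul0r addr0.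
- move=> j i; rewrite diag; case: eqP => [-> _ ip | _ Tjj ij].
    by rewrite E (negbTE ip) (pivot_row_p pivot_p) mulr1 sub0r addrN.
  by rewrite E (T_piv j i Tjj ij) (pivot_row_pivot_col pivot_p Tjj) mulr0 addr0.
Qed.

(* [v] is its residual plus a combination of rows of [T], the residual is a
   multiple of the new pivot row, and [T] is recovered from the new matrix by
   subtracting multiples of that row. *)
Lemma trref_insert_eqmx : (trref_insert T v :=: T + v)%MS.
Proof.
have vE : v = residual T v + v *m T by rewrite /residual subrK.
apply/eqmxP/andP; split.
  rewrite addmx_sub ?addsmxSl // mulmx_sub // scalemx_sub // addmx_sub ?addsmxSr //.
  by rewrite eqmx_opp (submx_trans (submxMl _ _) (addsmxSl _ _)).
have [|[p pivot_p]] := row_pivot_or_zero (residual T v) 0.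
  rewrite row_id => res0; rewrite trref_insert_residual0 // addsmx_sub submx_refl.
  by rewrite {1}vE res0 add0r submxMl.
have rowp := row_trref_insert_pivot pivot_p.
have sTT' : (T <= trref_insert T v)%MS.
  have TE : T = trref_insert T v - elim_col T v *m row p (trref_insert T v).
    by rewrite rowp /trref_insert addrK.
  by rewrite {1}TE addmx_sub // eqmx_opp mulmx_sub // row_sub.
rewrite addsmx_sub sTT' {1}vE addmx_sub ?(submx_trans (submxMl _ _)) //.
by rewrite (residual_pivot_rowE pivot_p) -rowp scalemx_sub // row_sub.
Qed.

End Insertion.

Section RowReduction.
Variables (k : fieldType) (m n : nat).
Implicit Types (A R : 'M[k]_(m, n)) (T : 'M[k]_n).

Definition trref_mx A : 'M[k]_n := foldl (fun T i => trref_insert T (row i A)) 0 (index_enum 'I_m).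

Lemma foldl_trref_insert A (s : seq 'I_m) T :
  let T' := foldl (fun T i => trref_insert T (row i A)) T s in
  is_trref T -> is_trref T' /\ (T' :=: T + \sum_(i <- s) <<row i A>>)%MS.
Proof.
elim: s T => [|i s IHs] T /= trT.
  by split=> //; rewrite big_nil addsmx0_id.
have [trT' eqT'] := IHs _ (trref_insert_trref (row i A) trT); split=> //.
apply: eqmx_trans eqT' _; rewrite big_cons addsmxA.
apply: adds_eqmx (eqmx_refl _); apply: eqmx_trans (trref_insert_eqmx _ trT) _.
exact: adds_eqmx (eqmx_refl _) (eqmx_sym (genmxE _)).
Qed.

Lemma trref_mx_trref A : is_trref (trref_mx A).
Proof. exact: (foldl_trref_insert A (index_enum 'I_m) (trref0 k n)).1. Qed.

Lemma trref_mx_eqmx A : (trref_mx A :=: A)%MS.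
Proof.
apply: eqmx_trans (foldl_trref_insert A (index_enum 'I_m) (trref0 k n)).2 _.
rewrite adds0mx_id; apply/eqmxP/andP; split.
  by apply/sumsmx_subP=> i _; rewrite genmxE row_sub.
by apply/row_subP=> i; apply: (sumsmx_sup i); rewrite ?genmxE.
Qed.

Lemma rref_pivot_col_inj R i i' j : is_rref R -> is_pivot R i j -> is_pivot R i' j -> i = i'.
Proof.
case=> _ R_piv piv_i /andP[Ri'j _]; apply/eqP; apply: contraTT Ri'j => i'i.
by rewrite negbK (R_piv _ _ piv_i).2 // eq_sym.
Qed.

Lemma tRREF_trref R : is_rref R -> is_trref (tRREF R).
Proof.
case=> _ R_piv; split.
- move=> j l lj; rewrite mxE; case: pickP => [i /andP[_ /forallP R_lt] | _] //.
  by move: (R_lt l); rewrite lj => /eqP.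
- move=> j; rewrite mxE; case: pickP => [i /R_piv[-> _]|_]; by [right | left].
- move=> j l; rewrite !mxE; case: pickP => [i /R_piv[-> _] /eqP | _] //.
  by rewrite oner_eq0.
- move=> j i; rewrite !mxE; case: (pickP (fun r => is_pivot R r j)) => [r piv_r|_]; last first.
    by move=> /eqP; rewrite eq_sym oner_eq0.
  move=> _ ij; case: pickP => [r' piv_r' | _] //; apply: (R_piv _ _ piv_r).2.
  by apply: contra ij => /eqP eq_r'; rewrite eq_r' in piv_r'; rewrite (is_pivot_inj piv_r' piv_r).
Qed.

Lemma tRREF_eqmx R : is_rref R -> (tRREF R :=: R)%MS.
Proof.
move=> rrefR; apply/eqmxP/andP; split.
  apply/row_subP=> j; case: (pickP (fun i => is_pivot R i j)) => [i piv_i|no_piv].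
    suff -> : row j (tRREF R) = row i R by apply: row_sub.
    apply/rowP=> l; rewrite !mxE; case: pickP => [i' piv_i' | /(_ i)]; last by rewrite piv_i.
    by rewrite (rref_pivot_col_inj rrefR piv_i piv_i').
  suff -> : row j (tRREF R) = 0 by apply: sub0mx.
  by apply/rowP=> l; rewrite !mxE; case: pickP => [i /(elimT idP)|]; rewrite ?no_piv.
apply/row_subP=> i; have [-> | [p piv_p]] := row_pivot_or_zero R i; first exact: sub0mx.
suff -> : row i R = row p (tRREF R) by apply: row_sub.
apply/rowP=> l; rewrite !mxE; case: pickP => [i' piv_i' | /(_ i)]; last by rewrite piv_p.
by rewrite (rref_pivot_col_inj rrefR piv_p piv_i').
Qed.

Lemma trref_mx_rref A R : rref_of A R -> trref_mx A = tRREF R.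
Proof.
case=> rrefR [P unitP R_PA]; apply: trref_eqmx_eq (trref_mx_trref A) (tRREF_trref rrefR) _.
apply: eqmx_trans (trref_mx_eqmx A) _; apply: eqmx_sym; apply: eqmx_trans (tRREF_eqmx rrefR) _.
by rewrite R_PA; apply: eqmxMfull; rewrite row_full_unit.
Qed.

End RowReduction.

(** * Generating straight line programs *)

(* A generator is run at the current tape length [N]; it returns the
   instructions it emits and the tape addresses of its results.  Addresses
   are absolute, so the instruction reading address [a] at position [N]
   uses the offset [N - a]. *)
Definition gen (k : fieldType) (A : Type) := nat -> slp k * A.

Definition gen_ret (k : fieldType) A (a : A) : gen k A := fun _ => ([::], a).

Definition gen_bind (k : fieldType) A B (c : gen k A) (f : A -> gen k B) : gen k B :=
  fun N => let: (p, a) := c N in let: (q, b) := f a (N + size p) in (p ++ q, b).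

Arguments gen_ret {k A}.

Local Notation "'let*' x := c 'in' f" := (gen_bind c (fun x => f))
  (at level 200, x name, c at level 100, f at level 200).

Section Generators.
Variable k : fieldType.

Definition gen_emit (g : nat -> instr k) : gen k nat := fun N => ([:: g N], N).

Definition gen_add a b := gen_emit (fun N => IAdd k (N - a) (N - b)).
Definition gen_sub a b := gen_emit (fun N => ISub k (N - a) (N - b)).
Definition gen_mul a b := gen_emit (fun N => IMul k (N - a) (N - b)).
Definition gen_qinv a := gen_emit (fun N => IQinv k (N - a)).
Definition gen_recall a := gen_emit (fun N => IRecall k (N - a)).
Definition gen_const c := gen_emit (fun _ => IConst c).

Fixpoint gen_map (I : eqType) (F : I -> gen k nat) (s : seq I) : gen k (I -> nat) :=
  if s is i :: s' then
    let* a := F i in let* r := gen_map F s' in gen_ret (fun j => if j == i then a else r j)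
  else gen_ret (fun _ => 0%N).

Fixpoint gen_foldl B I (g : B -> I -> gen k B) (b : B) (s : seq I) : gen k B :=
  if s is i :: s' then let* b' := g b i in gen_foldl g b' s' else gen_ret b.

Definition gen_size A (c : gen k A) (K : nat) := forall N, (size (c N).1 <= K)%N.

Lemma gen_size_bind A B (c : gen k A) (f : A -> gen k B) K1 K2 :
  gen_size c K1 -> (forall a, gen_size (f a) K2) -> gen_size (gen_bind c f) (K1 + K2)%N.
Proof.
move=> c_K1 f_K2 N; rewrite /gen_bind; have := c_K1 N; case: (c N) => p a /= p_K1.
by have := f_K2 a (N + size p); case: (f a _) => q b /= q_K2; rewrite size_cat leq_add.
Qed.

Lemma gen_size_le A (c : gen k A) K K' : gen_size c K -> (K <= K')%N -> gen_size c K'.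
Proof. by move=> c_K le_KK' N; apply: leq_trans le_KK'. Qed.

Lemma gen_size_ret A (a : A) : gen_size (gen_ret a) 0.
Proof. by []. Qed.

Lemma gen_size_emit g : gen_size (gen_emit g) 1.
Proof. by []. Qed.

Lemma gen_size_map (I : eqType) (F : I -> gen k nat) s K :
  (forall i, gen_size (F i) K) -> gen_size (gen_map F s) (size s * K)%N.
Proof.
move=> F_K; elim: s => [|i s IHs] //=; rewrite mulSn -(addn0 (size s * K)%N).
by apply: gen_size_bind => // a; apply: gen_size_bind.
Qed.

Lemma gen_size_foldl B I (g : B -> I -> gen k B) s K :
  (forall b i, gen_size (g b i) K) -> forall b, gen_size (gen_foldl g b s) (size s * K)%N.
Proof.
move=> g_K; elim: s => [|i s IHs] b //=; rewrite mulSn.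
by apply: gen_size_bind.
Qed.

Lemma run_slp_cat (p q : slp k) t : run_slp (p ++ q) t = run_slp q (run_slp p t).
Proof. by rewrite /run_slp foldl_cat. Qed.

Lemma size_run_slp (p : slp k) t : size (run_slp p t) = (size t + size p)%N.
Proof. by elim: p t => [|g p IHp] t /=; rewrite ?addn0 // IHp size_rcons addSnnS. Qed.

Lemma prefix_run_slp (p : slp k) t : prefix t (run_slp p t).
Proof.
elim: p t => [|g p IHp] t /=; first exact: prefix_refl.
exact: prefix_trans (prefix_rcons t _) (IHp _).
Qed.

Lemma slp_wf_cat N (p q : slp k) :
  slp_wf N p -> slp_wf (N + size p) q -> slp_wf N (p ++ q).
Proof.
move=> wf_p wf_q i; rewrite size_cat nth_cat => i_lt; case: ltnP => [/wf_p //|p_le_i].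
have := wf_q (i - size p)%N; rewrite ltn_subLR // -addnA subnKC // => /(_ i_lt).
exact: sub_all.
Qed.

Definition holds (t : seq k) (a : nat) (x : k) := (a < size t)%N /\ nth 0 t a = x.

Lemma holds_prefix t t1 a x : prefix t t1 -> holds t a x -> holds t1 a x.
Proof.
case/prefixP=> e ->{t1} [a_lt <-]; split; first by rewrite size_cat ltn_addr.
by rewrite nth_cat a_lt.
Qed.

Definition gen_ok A (c : gen k A) (t : seq k) (Q : seq k -> A -> Prop) :=
  slp_wf (size t) (c (size t)).1 /\ Q (run_slp (c (size t)).1 t) (c (size t)).2.

Lemma gen_ok_bind A B (c : gen k A) (f : A -> gen k B) t P Q :
  gen_ok c t P -> (forall t1 a, prefix t t1 -> P t1 a -> gen_ok (f a) t1 Q) ->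
  gen_ok (gen_bind c f) t Q.
Proof.
rewrite /gen_ok /gen_bind; case: (c (size t)) => p a /= [wf_p P_a] f_ok.
have [] := f_ok _ _ (prefix_run_slp p t) P_a; rewrite size_run_slp.
by case: (f a _) => q b /= wf_q Q_b; split; [exact: slp_wf_cat | rewrite run_slp_cat].
Qed.

Lemma gen_ok_weaken A (c : gen k A) t (P Q : seq k -> A -> Prop) :
  gen_ok c t P -> (forall t1 r, P t1 r -> Q t1 r) -> gen_ok c t Q.
Proof. by case=> wf_c P_c PQ; split=> //; apply: PQ. Qed.

Lemma gen_ok_ret A (a : A) t (Q : seq k -> A -> Prop) : Q t a -> gen_ok (gen_ret a) t Q.
Proof. by split=> // i. Qed.

Lemma gen_ok_emit g t x :
  all (fun j => (0 < j <= size t)%N) (instr_offsets (g (size t))) ->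
  exec_instr t (g (size t)) = x ->
  gen_ok (gen_emit g) t (fun t1 r => t1 = rcons t x /\ r = size t).
Proof. by move=> offs_g <-; split=> // [[|i]] //=; rewrite addn0. Qed.

Lemma holds_rcons t x : holds (rcons t x) (size t) x.
Proof. by rewrite /holds size_rcons nth_rcons ltnn eqxx. Qed.

Lemma holds_offset t a x : holds t a x -> (0 < size t - a <= size t)%N.
Proof. by case=> a_lt _; rewrite subn_gt0 a_lt leq_subr. Qed.

Lemma tape_get_holds t a x : holds t a x -> tape_get t (size t - a) = x.
Proof. by case=> a_lt <-; rewrite /tape_get subKn // ltnW. Qed.

Lemma gen_emit_holds g t x :
  all (fun j => (0 < j <= size t)%N) (instr_offsets (g (size t))) ->
  exec_instr t (g (size t)) = x ->
  gen_ok (gen_emit g) t (fun t1 r => holds t1 r x).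
Proof.
move=> offs_g exec_g; apply: (gen_ok_weaken (gen_ok_emit offs_g exec_g)) => _ _ [-> ->].
exact: holds_rcons.
Qed.

Section Operations.
Variables (t : seq k) (a b : nat) (xa xb : k).
Hypotheses (ha : holds t a xa) (hb : holds t b xb).
Let reads := (holds_offset ha, holds_offset hb, tape_get_holds ha, tape_get_holds hb).

Lemma gen_add_ok : gen_ok (gen_add a b) t (fun t1 r => holds t1 r (xa + xb)).
Proof. by apply: gen_emit_holds; rewrite /= ?reads. Qed.

Lemma gen_sub_ok : gen_ok (gen_sub a b) t (fun t1 r => holds t1 r (xa - xb)).
Proof. by apply: gen_emit_holds; rewrite /= ?reads. Qed.

Lemma gen_mul_ok : gen_ok (gen_mul a b) t (fun t1 r => holds t1 r (xa * xb)).
Proof. by apply: gen_emit_holds; rewrite /= ?reads. Qed.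

Lemma gen_qinv_ok : gen_ok (gen_qinv a) t (fun t1 r => holds t1 r (qinv xa)).
Proof. by apply: gen_emit_holds; rewrite /= ?reads. Qed.

Lemma gen_recall_ok : gen_ok (gen_recall a) t (fun t1 _ => t1 = rcons t xa).
Proof.
have offs : all (fun j => (0 < j <= size t)%N) [:: size t - a]%N by rewrite /= ?reads.
have := @gen_ok_emit (fun N => IRecall k (N - a)) t xa offs (tape_get_holds ha).
by move/gen_ok_weaken; apply=> t1 r [].
Qed.

End Operations.

Lemma gen_const_ok t c : gen_ok (gen_const c) t (fun t1 r => holds t1 r c).
Proof. exact: gen_emit_holds. Qed.

Lemma gen_map_ok (I : eqType) (F : I -> gen k nat) (x : I -> k) s t :
  (forall i t1, prefix t t1 -> gen_ok (F i) t1 (fun t2 a => holds t2 a (x i))) ->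
  gen_ok (gen_map F s) t (fun t1 r => forall i, i \in s -> holds t1 (r i) (x i)).
Proof.
elim: s t => [|i s IHs] t F_ok /=; first exact: gen_ok_ret.
apply: (gen_ok_bind (F_ok i t (prefix_refl t))) => t1 a pre1 ha.
apply: (gen_ok_bind (IHs t1 _)) => [j t2 pre2 | t2 r pre2 hr].
  exact: F_ok (prefix_trans pre1 pre2).
apply: gen_ok_ret => j; rewrite inE; case: eqP => [-> _|_ /hr //].
exact: holds_prefix pre2 ha.
Qed.

Lemma gen_foldl_ok B I X (g : B -> I -> gen k B) (f : X -> I -> X)
    (Inv : seq k -> B -> X -> Prop) s t b x :
  (forall i t1 b x, prefix t t1 -> Inv t1 b x ->
     gen_ok (g b i) t1 (fun t2 b' => Inv t2 b' (f x i))) ->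
  Inv t b x -> gen_ok (gen_foldl g b s) t (fun t1 b' => Inv t1 b' (foldl f x s)).
Proof.
elim: s t b x => [|i s IHs] t b x g_ok Inv_b /=; first exact: gen_ok_ret.
apply: (gen_ok_bind (g_ok i t b x (prefix_refl t) Inv_b)) => t1 b1 pre1 Inv_b1.
by apply: IHs => // j t2 b2 x2 pre2; apply: g_ok (prefix_trans pre1 pre2).
Qed.

Definition gen_dot I (a b : I -> nat) (z : nat) (s : seq I) : gen k nat :=
  gen_foldl (fun acc i => let* y := gen_mul (a i) (b i) in gen_add acc y) z s.

Definition gen_prod I (a : I -> nat) (e : nat) (s : seq I) : gen k nat :=
  gen_foldl (fun acc i => gen_mul acc (a i)) e s.

Definition gen_copy I (a : I -> nat) (s : seq I) : gen k nat :=
  gen_foldl (fun _ i => gen_recall (a i)) 0%N s.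

Lemma gen_size_dot I (a b : I -> nat) z s : gen_size (gen_dot a b z s) (size s * 2)%N.
Proof.
apply: gen_size_foldl => acc i.
by apply: (gen_size_bind (K1 := 1) (K2 := 1)) => *; apply: gen_size_emit.
Qed.

Lemma gen_size_prod I (a : I -> nat) e s : gen_size (gen_prod a e s) (size s).
Proof. by rewrite -[size s]muln1; apply: gen_size_foldl => *; apply: gen_size_emit. Qed.

Lemma gen_size_copy I (a : I -> nat) s : gen_size (gen_copy a s) (size s).
Proof. by rewrite -[size s]muln1; apply: gen_size_foldl => *; apply: gen_size_emit. Qed.

Section Loops.
Variables (I : Type) (t : seq k).

Lemma gen_dot_ok (a b : I -> nat) (xa xb : I -> k) z x0 s :
  (forall i, holds t (a i) (xa i)) -> (forall i, holds t (b i) (xb i)) -> holds t z x0 ->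
  gen_ok (gen_dot a b z s) t (fun t1 r => holds t1 r (x0 + \sum_(i <- s) xa i * xb i)).
Proof.
move=> ha hb hz; rewrite -(@foldl_bigop _ 0 +%R _ (fun i => xa i * xb i)).
apply: (gen_foldl_ok (Inv := fun t1 acc y => holds t1 acc y)) hz => i t1 acc y pre1 hy.
apply: (gen_ok_bind (gen_mul_ok (holds_prefix pre1 (ha i)) (holds_prefix pre1 (hb i)))).
by move=> t2 r pre2 hr; apply: gen_add_ok (holds_prefix pre2 hy) hr.
Qed.

Lemma gen_prod_ok (a : I -> nat) (xa : I -> k) e xe s :
  (forall i, holds t (a i) (xa i)) -> holds t e xe ->
  gen_ok (gen_prod a e s) t (fun t1 r => holds t1 r (xe * \prod_(i <- s) xa i)).
Proof.
move=> ha he; rewrite -(@foldl_bigop _ 1 *%R _ xa).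
apply: (gen_foldl_ok (Inv := fun t1 acc y => holds t1 acc y)) he => i t1 acc y pre1 hy.
exact: gen_mul_ok hy (holds_prefix pre1 (ha i)).
Qed.

Lemma gen_copy_ok (a : I -> nat) (x : I -> k) s :
  (forall i, holds t (a i) (x i)) -> gen_ok (gen_copy a s) t (fun t1 _ => t1 = t ++ map x s).
Proof.
rewrite /gen_copy; elim: s 0%N t => [|i s IHs] b t0 ha /=.
  by apply: gen_ok_ret; rewrite cats0.
apply: (gen_ok_bind (gen_recall_ok (ha i))) => _ b1 _ ->.
apply: (gen_ok_weaken (IHs _ _ _)) => [j | t2 _ ->]; last by rewrite cat_rcons.
exact: holds_prefix (prefix_rcons _ _) (ha j).
Qed.

End Loops.

End Generators.

Arguments gen_size {k A} c K%_nat_scope.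
Arguments gen_add {k}.
Arguments gen_sub {k}.
Arguments gen_mul {k}.
Arguments gen_qinv {k}.
Arguments gen_recall {k}.
Arguments gen_dot {k I}.
Arguments gen_prod {k I}.
Arguments gen_copy {k I}.

(** * A straight line program for the tRREF *)

Section InsertionGenerator.
Variables (k : fieldType) (n : nat).
Local Notation ords := (index_enum 'I_n).
Implicit Types (t : seq k) (TA : 'I_n -> 'I_n -> nat) (rA : 'I_n -> nat).

Definition holds_vec t (a : 'I_n -> nat) (x : 'I_n -> k) := forall l, holds t (a l) (x l).

Definition holds_mx t TA (T : 'M[k]_n) := forall j l, holds t (TA j l) (T j l).

Lemma holds_vec_prefix t t1 a x : prefix t t1 -> holds_vec t a x -> holds_vec t1 a x.
Proof. by move=> pre ha l; apply: holds_prefix pre (ha l). Qed.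

Lemma holds_mx_prefix t t1 TA T : prefix t t1 -> holds_mx t TA T -> holds_mx t1 TA T.
Proof. by move=> pre hT j l; apply: holds_prefix pre (hT j l). Qed.

Definition gen_vec (F : 'I_n -> gen k nat) : gen k ('I_n -> nat) := gen_map F ords.

Definition gen_mx (F : 'I_n -> 'I_n -> gen k nat) : gen k ('I_n -> 'I_n -> nat) :=
  let* r := gen_map (fun jl : 'I_n * 'I_n => F jl.1 jl.2) (index_enum _) in
  gen_ret (fun j l => r (j, l)).

Lemma gen_vec_ok (F : 'I_n -> gen k nat) x t :
  (forall l t1, prefix t t1 -> gen_ok (F l) t1 (fun t2 a => holds t2 a (x l))) ->
  gen_ok (gen_vec F) t (fun t1 r => holds_vec t1 r x).
Proof.
move=> F_ok; apply: (gen_ok_weaken (gen_map_ok ords F_ok)) => t1 r hr l.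
exact: hr (mem_index_enum l).
Qed.

Lemma gen_mx_ok (F : 'I_n -> 'I_n -> gen k nat) (T : 'M[k]_n) t :
  (forall j l t1, prefix t t1 -> gen_ok (F j l) t1 (fun t2 a => holds t2 a (T j l))) ->
  gen_ok (gen_mx F) t (fun t1 TA => holds_mx t1 TA T).
Proof.
move=> F_ok; apply: (gen_ok_bind (gen_map_ok (x := fun jl => T jl.1 jl.2) _ _)).
  by move=> [j l] t1; apply: F_ok.
by move=> t1 r _ hr; apply: gen_ok_ret => j l; apply: (hr (j, l) (mem_index_enum _)).
Qed.

Definition gen_residual TA (vA : 'I_n -> nat) (z : nat) : gen k ('I_n -> nat) :=
  gen_vec (fun l => let* y := gen_dot vA (TA^~ l) z ords in gen_sub (vA l) y).

Definition gen_zero_ind (a e : nat) : gen k nat :=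
  let* q := gen_qinv a in let* d := gen_mul a q in gen_sub e d.

Definition gen_pivot_sel rA (e : nat) : gen k ('I_n -> nat) :=
  let* cA := gen_vec (fun l => gen_zero_ind (rA l) e) in
  gen_vec (fun l => let* y := gen_prod cA e [seq i : 'I_n <- ords | (i < l)%N] in
                    let* d := gen_sub e (cA l) in gen_mul y d).

Definition gen_pivot_row rA (sA : 'I_n -> nat) (z : nat) : gen k ('I_n -> nat) :=
  let* qA := gen_vec (fun l => gen_qinv (rA l)) in
  let* c := gen_dot sA qA z ords in
  gen_vec (fun l => gen_mul c (rA l)).

Definition gen_update TA (sA wA : 'I_n -> nat) (z : nat) : gen k ('I_n -> 'I_n -> nat) :=
  let* uA := gen_vec (fun j => let* y := gen_dot (TA j) sA z ords in gen_sub (sA j) y) in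
  gen_mx (fun j l => let* y := gen_mul (uA j) (wA l) in gen_add (TA j l) y).

Definition gen_insert TA (vA : 'I_n -> nat) : gen k ('I_n -> 'I_n -> nat) :=
  let* z := gen_const (0 : k) in
  let* e := gen_const (1 : k) in
  let* rA := gen_residual TA vA z in
  let* sA := gen_pivot_sel rA e in
  let* wA := gen_pivot_row rA sA z in
  gen_update TA sA wA z.

Lemma gen_size_vec (F : 'I_n -> gen k nat) K :
  (forall l, gen_size (F l) K) -> gen_size (gen_vec F) (n * K).
Proof.
by move=> F_K; apply: (gen_size_le (gen_size_map _ F_K)); rewrite size_index_enum card_ord.
Qed.

Lemma gen_size_mx (F : 'I_n -> 'I_n -> gen k nat) K :
  (forall j l, gen_size (F j l) K) -> gen_size (gen_mx F) (n * n * K).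
Proof.
move=> F_K; rewrite -(addn0 (n * n * K)%N); apply: gen_size_bind => [|r]; last exact: gen_size_ret.
apply: (gen_size_le (gen_size_map _ (K := K) _)) => [[j l] //|].
by rewrite size_index_enum card_prod card_ord.
Qed.

Lemma gen_size_insert TA vA : gen_size (gen_insert TA vA) (7 * n ^ 2 + 11 * n + 2).
Proof.
have dotK (a b : 'I_n -> nat) z : gen_size (gen_dot a b z ords : gen k nat) (n * 2).
  by apply: (gen_size_le (gen_size_dot k a b z ords)); rewrite size_index_enum card_ord.
have subK a b : gen_size (gen_sub a b : gen k nat) 1 := gen_size_emit _.
have mulK a b : gen_size (gen_mul a b : gen k nat) 1 := gen_size_emit _.
apply: (gen_size_le (K := 1 + (1 + (n * (n * 2 + 1) + (n * (1 + (1 + 1)) + n * (n + (1 + 1)) +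
  (n * 1 + (n * 2 + n * 1) + (n * (n * 2 + 1) + n * n * (1 + 1)))))))); last by lia.
apply: gen_size_bind => [|z]; first exact: gen_size_emit.
apply: gen_size_bind => [|e]; first exact: gen_size_emit.
apply: gen_size_bind => [|rA]; first by apply: gen_size_vec => l; apply: gen_size_bind.
apply: gen_size_bind => [|sA].
  apply: gen_size_bind => [|cA].
    by apply: gen_size_vec => l; do 2 apply: gen_size_bind => //.
  apply: gen_size_vec => l; apply: gen_size_bind => [|y]; last exact: gen_size_bind.
  apply: (gen_size_le (gen_size_prod k _ _ _)).
  by rewrite size_filter (leq_trans (count_size _ _)) // size_index_enum card_ord.
apply: gen_size_bind => [|wA].
  apply: gen_size_bind => [|qA]; first by apply: gen_size_vec => l; apply: gen_size_emit.
  by apply: gen_size_bind => // c; apply: gen_size_vec.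
apply: gen_size_bind => [|uA]; first by apply: gen_size_vec => j; apply: gen_size_bind.
by apply: gen_size_mx => j l; apply: gen_size_bind.
Qed.

Lemma gen_zero_ind_ok t a e x :
  holds t a x -> holds t e 1 -> gen_ok (gen_zero_ind a e) t (fun t1 r => holds t1 r (1 - nzind x)).
Proof.
move=> ha he; apply: (gen_ok_bind (gen_qinv_ok ha)) => t1 q pre1 hq.
move: ha he => /(holds_prefix pre1) ha /(holds_prefix pre1) he.
apply: (gen_ok_bind (gen_mul_ok ha hq)) => t2 d pre2 hd.
exact: gen_sub_ok (holds_prefix pre2 he) hd.
Qed.

Section Correctness.
Variables (T : 'M[k]_n) (v : 'rV[k]_n).

Lemma gen_residual_ok t TA vA z :
  holds_mx t TA T -> holds_vec t vA (v 0) -> holds t z 0 ->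
  gen_ok (gen_residual TA vA z) t (fun t1 rA => holds_vec t1 rA (residual T v 0)).
Proof.
move=> hT hv hz; apply: gen_vec_ok => l t1 pre1.
move: hT hv hz => /(holds_mx_prefix pre1) hT /(holds_vec_prefix pre1) hv /(holds_prefix pre1) hz.
apply: (gen_ok_bind (gen_dot_ok ords hv (fun i => hT i l) hz)) => t2 y pre2 hy.
apply: (gen_ok_weaken (gen_sub_ok (holds_prefix pre2 (hv l)) hy)) => t3 r.
by rewrite add0r !mxE.
Qed.

Lemma gen_pivot_sel_ok t rA e :
  holds_vec t rA (residual T v 0) -> holds t e 1 ->
  gen_ok (gen_pivot_sel rA e) t (fun t1 sA => holds_vec t1 sA (pivot_sel T v)).
Proof.
move=> hr he; apply: (gen_ok_bind (gen_vec_ok (x := fun l => 1 - nzind (residual T v 0 l)) _)).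
  by move=> l t1 pre1; apply: gen_zero_ind_ok (holds_prefix pre1 (hr l)) (holds_prefix pre1 he).
move=> t1 cA pre1 hc; apply: gen_vec_ok => l t2 pre2.
move: hc he => /(holds_vec_prefix pre2) hc /(holds_prefix (prefix_trans pre1 pre2)) he.
apply: (gen_ok_bind (gen_prod_ok [seq i : 'I_n <- ords | (i < l)%N] hc he)) => t3 y pre3 hy.
apply: (gen_ok_bind (gen_sub_ok (holds_prefix pre3 he) (holds_prefix pre3 (hc l)))).
move=> t4 d pre4 hd.
apply: (gen_ok_weaken (gen_mul_ok (holds_prefix pre4 hy) hd)) => t5 r.
by rewrite /pivot_sel mul1r big_filter subKr.
Qed.

Lemma gen_pivot_row_ok t rA sA z :
  holds_vec t rA (residual T v 0) -> holds_vec t sA (pivot_sel T v) -> holds t z 0 ->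
  gen_ok (gen_pivot_row rA sA z) t (fun t1 wA => holds_vec t1 wA (pivot_row T v 0)).
Proof.
move=> hr hs hz; apply: (gen_ok_bind (gen_vec_ok (x := fun l => qinv (residual T v 0 l)) _)).
  by move=> l t1 pre1; apply: gen_qinv_ok (holds_prefix pre1 (hr l)).
move=> t1 qA pre1 hq.
move: hr hs hz => /(holds_vec_prefix pre1) hr /(holds_vec_prefix pre1) hs /(holds_prefix pre1) hz.
apply: (gen_ok_bind (gen_dot_ok ords hs hq hz)) => t2 c pre2 hc.
apply: gen_vec_ok => l t3 pre3; move: hr => /(holds_vec_prefix (prefix_trans pre2 pre3)) hr.
apply: (gen_ok_weaken (gen_mul_ok (holds_prefix pre3 hc) (hr l))).
by move=> t4 r; rewrite /pivot_row add0r => h; rewrite mxE.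
Qed.

Lemma gen_update_ok t TA sA wA z :
  holds_mx t TA T -> holds_vec t sA (pivot_sel T v) -> holds_vec t wA (pivot_row T v 0) ->
  holds t z 0 ->
  gen_ok (gen_update TA sA wA z) t (fun t1 TA' => holds_mx t1 TA' (trref_insert T v)).
Proof.
move=> hT hs hw hz; apply: (gen_ok_bind (gen_vec_ok (x := fun j => elim_col T v j 0) _)).
  move=> j t1 pre1.
  move: hT hs hz => /(holds_mx_prefix pre1) hT /(holds_vec_prefix pre1) hs /(holds_prefix pre1) hz.
  apply: (gen_ok_bind (gen_dot_ok ords (hT j) hs hz)) => t2 y pre2 hy.
  apply: (gen_ok_weaken (gen_sub_ok (holds_prefix pre2 (hs j)) hy)) => t3 r.
  by rewrite add0r mxE.
move=> t1 uA pre1 hu; apply: gen_mx_ok => j l t2 pre2.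
have pre12 := prefix_trans pre1 pre2.
move: hT hw => /(holds_mx_prefix pre12) hT /(holds_vec_prefix pre12) hw.
apply: (gen_ok_bind (gen_mul_ok (holds_prefix pre2 (hu j)) (hw l))) => t3 y pre3 hy.
apply: (gen_ok_weaken (gen_add_ok (holds_prefix pre3 (hT j l)) hy)) => t4 r.
by rewrite trref_insertE.
Qed.

Lemma gen_insert_ok t TA vA :
  holds_mx t TA T -> holds_vec t vA (v 0) ->
  gen_ok (gen_insert TA vA) t (fun t1 TA' => holds_mx t1 TA' (trref_insert T v)).
Proof.
move=> hT hv; apply: (gen_ok_bind (gen_const_ok _ _)) => t1 z pre1 hz.
apply: (gen_ok_bind (gen_const_ok _ _)) => t2 e pre2 he.
have pre12 := prefix_trans pre1 pre2.
move: hT hv hz => /(holds_mx_prefix pre12) hT /(holds_vec_prefix pre12) hv /(holds_prefix pre2) hz.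
apply: (gen_ok_bind (gen_residual_ok hT hv hz)) => t3 rA pre3 hr.
move: hT hz he => /(holds_mx_prefix pre3) hT /(holds_prefix pre3) hz /(holds_prefix pre3) he.
apply: (gen_ok_bind (gen_pivot_sel_ok hr he)) => t4 sA pre4 hs.
move: hT hz hr => /(holds_mx_prefix pre4) hT /(holds_prefix pre4) hz /(holds_vec_prefix pre4) hr.
apply: (gen_ok_bind (gen_pivot_row_ok hr hs hz)) => t5 wA pre5 hw.
move: hT hs hz => /(holds_mx_prefix pre5) hT /(holds_vec_prefix pre5) hs /(holds_prefix pre5) hz.
exact: gen_update_ok hT hs hw hz.
Qed.

End Correctness.

End InsertionGenerator.

Arguments gen_insert {k n}.

Section Entries.
Variables (k : fieldType) (m n : nat).

Lemma size_mx_entries (A : 'M[k]_(m, n)) : size (mx_entries A) = (m * n)%N.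
Proof. by rewrite size_allpairs !size_enum_ord. Qed.

Lemma nth_mx_entries (A : 'M[k]_(m, n)) (i : 'I_m) (j : 'I_n) :
  nth 0 (mx_entries A) (i * n + j) = A i j.
Proof.
have size_row (i' : 'I_m) : size [seq A i' j' | j' <- enum 'I_n] = n.
  by rewrite size_map size_enum_ord.
rewrite (nth_flatten_map 0 i size_row) ?size_enum_ord //.
by rewrite (nth_map j) ?size_enum_ord // !nth_ord_enum.
Qed.

Lemma holds_mx_entries (A : 'M[k]_(m, n)) (i : 'I_m) (j : 'I_n) :
  holds (mx_entries A) (i * n + j) (A i j).
Proof.
split; last exact: nth_mx_entries.
rewrite size_mx_entries (leq_trans (_ : _ < i.+1 * n)%N) //.
  by rewrite mulSn addnC ltn_add2r.
by rewrite leq_mul2r ltn_ord orbT.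
Qed.

End Entries.

Definition gen_trref (k : fieldType) (m n : nat) : gen k nat :=
  let* z := gen_const (0 : k) in
  let* TA := gen_foldl (fun TA (i : 'I_m) => gen_insert TA (fun l : 'I_n => i * n + l)%N)
                       (fun _ _ => z) (index_enum 'I_m) in
  gen_copy (fun jl : 'I_n * 'I_n => TA jl.1 jl.2) [seq (j, l) | j <- enum 'I_n, l <- enum 'I_n].

Section Program.
Variables (k : fieldType) (m n : nat).

Lemma gen_trref_ok (A : 'M[k]_(m, n)) :
  gen_ok (gen_trref k m n) (mx_entries A)
    (fun t _ => exists t0, t = t0 ++ mx_entries (trref_mx A)).
Proof.
apply: (gen_ok_bind (gen_const_ok _ _)) => t1 z pre1 hz.
apply: (gen_ok_bind (gen_foldl_ok (f := fun T i => trref_insert T (row i A))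
   (Inv := fun t TA T => holds_mx t TA T) (x := 0) (index_enum 'I_m) _ _)).
- move=> i t2 TA T pre2 hT.
  apply: gen_insert_ok hT _ => l; rewrite mxE.
  exact: holds_prefix (prefix_trans pre1 pre2) (holds_mx_entries A i l).
- by move=> j l; rewrite mxE.
move=> t2 TA _ hT.
apply: (gen_ok_weaken (gen_copy_ok (x := fun jl => trref_mx A jl.1 jl.2) _ _)) => [[j l]|t3 _ ->].
  exact: hT.
by exists t2; rewrite map_allpairs.
Qed.

Lemma gen_size_trref : gen_size (gen_trref k m n) (1 + (m * (7 * n ^ 2 + 11 * n + 2) + n * n)).
Proof.
apply: gen_size_bind => [|z]; first exact: gen_size_emit.
apply: gen_size_bind => [|TA].
  have insertK TA (i : 'I_m) := @gen_size_insert k n TA (fun l => i * n + l)%N.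
  apply: (gen_size_le (gen_size_foldl (index_enum 'I_m) insertK _)).
  by rewrite size_index_enum card_ord.
by apply: (gen_size_le (gen_size_copy _ _ _)); rewrite size_allpairs !size_enum_ord.
Qed.

Lemma gen_trref_wf : slp_wf (m * n) (gen_trref k m n (m * n)).1.
Proof. by have [wf_p _] := gen_trref_ok 0; rewrite size_mx_entries in wf_p. Qed.

Lemma gen_trref_output (A R : 'M[k]_(m, n)) : rref_of A R ->
  slp_output (n ^ 2) (gen_trref k m n (m * n)).1 (mx_entries A) = mx_entries (tRREF R).
Proof.
move=> AR; have [_ [t0 run_p]] := gen_trref_ok A; rewrite size_mx_entries in run_p.
rewrite /slp_output /= run_p -(trref_mx_rref AR) size_cat size_mx_entries mulnn addnK.
exact: drop_size_cat.
Qed.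

End Program.

(** * Constructibility *)

Section Constructibility.
Variables (k : fieldType) (m n : nat).

Lemma constructible_ext (f g : 'M[k]_(m, n) -> k) :
  constructible f -> (forall A, f A = g A) -> constructible g.
Proof. by move=> cf fg; rewrite -(functional_extensionality f g fg). Qed.

Lemma constructible_entries q : constructible (fun A : 'M[k]_(m, n) => nth 0 (mx_entries A) q).
Proof.
case: (ltnP q (m * n)) => [q_lt | q_ge]; last first.
  by apply: (constructible_ext (cons_const _ _ 0)) => A; rewrite nth_default ?size_mx_entries.
have n_gt0 : (0 < n)%N by case: n q_lt => //; rewrite muln0.
have i_lt : (q %/ n < m)%N by rewrite ltn_divLR.
have j_lt : (q %% n < n)%N by rewrite ltn_pmod.
apply: (constructible_ext (cons_coord k (Ordinal i_lt) (Ordinal j_lt))) => A.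
by rewrite -nth_mx_entries /= -divn_eq.
Qed.

Lemma constructible_tape (p : slp k) q :
  constructible (fun A : 'M[k]_(m, n) => nth 0 (run_slp p (mx_entries A)) q).
Proof.
elim/last_ind: p q => [|p g IHp] q; first exact: constructible_entries.
set S := (m * n + size p)%N.
have read j : constructible (fun A : 'M[k]_(m, n) => tape_get (run_slp p (mx_entries A)) j).
  apply: (constructible_ext (IHp (S - j)%N)) => A.
  by rewrite /tape_get size_run_slp size_mx_entries.
apply: (constructible_ext (f := fun A => if (q < S)%N then nth 0 (run_slp p (mx_entries A)) q
    else if q == S then exec_instr (run_slp p (mx_entries A)) g else 0)) => [|A].
  case: (q < S)%N; first exact: IHp.
  case: (q == S); last exact: cons_const.
  case: g => [j l|j l|j l|j|c|j] /=; do ?[exact: cons_const | exact: read].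
  - exact: cons_add (read j) (read l).
  - exact: cons_add (read j) (cons_opp (read l)).
  - exact: cons_mul (read j) (read l).
  - exact: cons_qinv (read j).
by rewrite -cats1 run_slp_cat /= nth_rcons size_run_slp size_mx_entries.
Qed.

Lemma constructible_slp_output (p : slp k) d q :
  constructible (fun A : 'M[k]_(m, n) => nth 0 (slp_output d p (mx_entries A)) q).
Proof.
apply: (constructible_ext (constructible_tape p (m * n + size p - d + q)%N)) => A.
by rewrite /slp_output /= nth_drop size_run_slp size_mx_entries.
Qed.

End Constructibility.

Theorem proposition2p1 (k : fieldType) :
  exists C : nat,
    forall m n : nat, (1 <= m)%N -> (1 <= n)%N ->
      exists p : slp k,
        [/\ slp_wf (m * n) p,
            (size p <= C * (m * n ^ 2 + n ^ 3))%N,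
            (forall (A R : 'M[k]_(m, n)), rref_of A R ->
               slp_output (n ^ 2) p (mx_entries A) = mx_entries (tRREF R))
          & (forall R_of : 'M[k]_(m, n) -> 'M[k]_(m, n),
               (forall A, rref_of A (R_of A)) ->
               forall j l : 'I_n, constructible (fun A => tRREF (R_of A) j l))].
Proof.
exists 21%N => m n m_gt0 n_gt0; set p := (gen_trref k m n (m * n)).1; exists p; split.
- exact: gen_trref_wf.
- by apply: leq_trans (gen_size_trref k m n (m * n)) _; nia.
- exact: gen_trref_output.
move=> R_of R_ofP j l.
apply: (constructible_ext (@constructible_slp_output k m n p (n ^ 2) (j * n + l))) => A.
by rewrite (gen_trref_output (R_ofP A)) nth_mx_entries.
Qed.
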